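(* Let $S\subseteq\{0,1\}^n$ and $f:S\to\{0,1\}$. If $f$ is total (i.e. $S=\{0,1\}^n$) then $\mathsf{maxPI}(f)\le\sqrt{C_0(f)C_1(f)}$. If $f$ is partial then $\mathsf{maxPI}(f)\le\min\{\sqrt{nC_0(f)},\sqrt{nC_1(f)}\}$.
   Context: A certificate for $f$ on $x\in S$ is a set $I\subseteq[n]$ such that every $y\in S$ with $y_i=x_i$ for all $i\in I$ satisfies $f(y)=f(x)$. $C_0(f)$ (resp. $C_1(f)$) is the maximum over $x\in f^{-1}(0)$ (resp. $f^{-1}(1)$) of the minimum size of a certificate for $x$. With $p=\{p_x:x\in S\}$ ranging over families of probability distributions on $[n]$, $$\mathsf{maxPI}(f)=\min_{p}\ \max_{x,y\in S:\ f(x)\neq f(y)} \frac{1}{\max_{i:\,x_i\neq y_i}\sqrt{p_x(i)p_y(i)}}.$$ *)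

From HB Require Import structures.
From mathcomp Require Import all_boot all_order all_algebra.
From mathcomp Require Import all_classical all_reals.
From mathcomp Require Import ereal.
Set Implicit Arguments. Unset Strict Implicit. Unset Printing Implicit Defensive.
Import Order.TTheory GRing.Theory Num.Theory.
Local Open Scope ring_scope.
Local Open Scope classical_set_scope.

Definition inp (n : nat) := {ffun 'I_n -> bool}.

Definition isCert n (S : {set inp n}) (f : inp n -> bool) (x : inp n)
    (I : {set 'I_n}) : bool :=
  [forall y in S, [forall i in I, y i == x i] ==> (f y == f x)].

(* minimum size of a certificate for x (the full set [n] is always one,
   so the minimum is <= n and the default n is harmless). *)
Definition minCert n (S : {set inp n}) (f : inp n -> bool) (x : inp n) : nat :=
  \big[minn/n]_(I : {set 'I_n} | isCert S f x I) #|I|.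

(* C_b(f): max over x in f^{-1}(b) of minCert (0 if f^{-1}(b) is empty). *)
Definition Cb n (S : {set inp n}) (f : inp n -> bool) (b : bool) : nat :=
  \max_(x in S | f x == b) minCert S f x.

Definition C0 n (S : {set inp n}) f := Cb S f false.
Definition C1 n (S : {set inp n}) f := Cb S f true.

Definition isDist (R : realType) n (q : 'I_n -> R) : Prop :=
  (forall i, 0 <= q i) /\ \sum_(i < n) q i = 1.

Definition pairVal (R : realType) n (p : inp n -> 'I_n -> R) (x y : inp n)
    : \bar R :=
  let m := \big[Num.max/0]_(i | x i != y i) Num.sqrt (p x i * p y i) in
  if m == 0 then +oo%E else (m^-1)%:E.

(* max over pairs x, y in S with f x <> f y (0 if there are none) *)
Definition PIobj (R : realType) n (S : {set inp n}) (f : inp n -> bool)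
    (p : inp n -> 'I_n -> R) : \bar R :=
  \big[Order.max/0%E]_(xy : inp n * inp n |
      [&& xy.1 \in S, xy.2 \in S & f xy.1 != f xy.2]) pairVal p xy.1 xy.2.

Definition maxPI (R : realType) n (S : {set inp n}) (f : inp n -> bool) : \bar R :=
  ereal_inf [set PIobj S f p | p in
               [set p : inp n -> 'I_n -> R | forall x, x \in S -> isDist (p x)]].

(* Let J_x be a minimum certificate for x and let p_x be uniform on J_x.
   If f x <> f y, then x and y differ somewhere on J_x.  When f is total they
   even differ somewhere on J_x ∩ J_y: otherwise the input agreeing with x on
   J_x and with y elsewhere would be certified both as f x and as f y.  At such
   an i, p_x(i) p_y(i) = 1/(|J_x| |J_y|) >= 1/(C_0 C_1).  When f is partial,
   keep p_x uniform on J_x for f x = b but take p_y uniform on all of [n] for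
   f y <> b; then p_x(i) p_y(i) >= 1/(n C_b). *)
From HB Require Import structures.
From mathcomp Require Import all_boot all_order all_algebra.
From mathcomp Require Import all_classical all_reals.
From mathcomp Require Import ereal.
Import Order.TTheory GRing.Theory Num.Theory.
Local Open Scope ring_scope.

Lemma maxPI_le (R : realType) n (S : {set inp n}) (f : inp n -> bool)
    (p : inp n -> 'I_n -> R) (B : R) :
  (forall x, x \in S -> isDist (p x)) -> 0 <= B ->
  (forall x y, x \in S -> y \in S -> f x != f y ->
     exists2 i, x i != y i & 1 <= B ^+ 2 * (p x i * p y i)) ->
  (maxPI R S f <= B%:E)%E.
Proof.
move=> p_dist B_ge0 p_pair.
apply: (@le_trans _ _ (PIobj S f p)); first by apply: ereal_inf_lbound; exists p.
apply: bigmax_le => [|[x y] /and3P[/= xS yS fxy]]; first by rewrite lee_fin.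
have [i xyi pxyi] := p_pair x y xS yS fxy.
rewrite /pairVal /=; set m := \big[_/_]_(j | _) _.
have pxy_gt0 : 0 < p x i * p y i.
  rewrite lt_def mulr_ge0 ?andbT; last by case: (p_dist y yS).
    by apply: contraTneq pxyi => ->; rewrite mulr0 ler10.
  by case: (p_dist x xS).
have sqrt_le_m : Num.sqrt (p x i * p y i) <= m by rewrite /m (bigD1 i) //= le_max lexx.
have m_gt0 : 0 < m by apply: lt_le_trans sqrt_le_m; rewrite sqrtr_gt0.
have one_le : 1 <= B * Num.sqrt (p x i * p y i).
  by rewrite -(ger0_norm B_ge0) -sqrtr_sqr -sqrtrM ?sqr_ge0 // -(@sqrtr1 R) ler_wsqrtr.
rewrite gt_eqF // lee_fin -[leLHS]mul1r ler_pdivrMr //.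
by apply: le_trans one_le _; rewrite ler_wpM2l.
Qed.

Definition unif_on (R : realType) {n} (J : {set 'I_n}) (i : 'I_n) : R :=
  if i \in J then #|J|%:R^-1 else 0.

Lemma unif_on_isDist (R : realType) {n} (J : {set 'I_n}) :
  (0 < #|J|)%N -> isDist (unif_on R J).
Proof.
move=> J_gt0; split=> [i|]; first by rewrite /unif_on; case: ifP; rewrite ?invr_ge0.
rewrite /unif_on -big_mkcond /= sumr_const -[LHS]mulr_natr mulVf //.
by rewrite pnatr_eq0 -lt0n.
Qed.

Lemma maxPI_le_unif_on (R : realType) {n} (S : {set inp n}) (f : inp n -> bool)
    (J : inp n -> {set 'I_n}) (c : nat) :
  (forall x, x \in S -> 0 < #|J x|)%N ->
  (forall x y, x \in S -> y \in S -> f x != f y ->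
     (#|J x| * #|J y| <= c)%N /\ exists i, [/\ i \in J x, i \in J y & x i != y i]) ->
  (maxPI R S f <= (Num.sqrt c%:R)%:E)%E.
Proof.
move=> J_gt0 J_pair.
apply: (@maxPI_le R n S f (fun x => unif_on R (J x))) => [x xS||x y xS yS fxy].
- exact/unif_on_isDist/J_gt0.
- exact: sqrtr_ge0.
have [card_le [i [ix iy xyi]]] := J_pair x y xS yS fxy.
exists i => //; rewrite /unif_on ix iy sqr_sqrtr ?ler0n // -invfM -natrM.
by rewrite ler_pdivlMr ?ltr0n ?muln_gt0 ?J_gt0 // mul1r ler_nat.
Qed.

Section Certificates.
Context {n : nat} (S : {set inp n}) (f : inp n -> bool).

Lemma isCert_setT x : isCert S f x [set: 'I_n].
Proof.
apply/forall_inP=> y _; apply/implyP=> /forall_inP xy.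
by have -> : y = x by apply/ffunP=> i; apply/eqP/xy.
Qed.

Lemma isCert_diff {x y I} : isCert S f x I -> y \in S -> f y != f x ->
  exists2 i, i \in I & x i != y i.
Proof.
move=> /forall_inP xI yS fyx.
have : ~~ [forall i in I, y i == x i] by apply: contra fyx; apply/implyP/xI.
by rewrite negb_forall_in => /exists_inP[i iI yxi]; exists i; rewrite // eq_sym.
Qed.

Lemma isCert_meet {x y I J} : S = [set: inp n] ->
  isCert S f x I -> isCert S f y J -> f x != f y ->
  exists i, [/\ i \in I, i \in J & x i != y i].
Proof.
move=> S_full /forall_inP xI /forall_inP yJ fxy.
have [i /and3P[iI iJ xyi]|noi] := pickP [pred i | [&& i \in I, i \in J & x i != y i]].
  by exists i.
case/negP: fxy; pose z : inp n := [ffun i => if i \in I then x i else y i].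
have zS : z \in S by rewrite S_full inE.
have /eqP <- : f z == f x.
  by apply: (implyP (xI z zS)); apply/forall_inP=> i iI; rewrite ffunE iI.
have /eqP <- : f z == f y; last by [].
apply: (implyP (yJ z zS)); apply/forall_inP=> i iJ; rewrite ffunE.
by case: ifP => // iI; move: (noi i); rewrite /= iI iJ /= => /negbFE.
Qed.

Definition mincert x := [arg min_(I < [set: 'I_n] | isCert S f x I) #|I|].

Lemma mincert_isCert x : isCert S f x (mincert x).
Proof. by rewrite /mincert; case: arg_minnP => //; apply: isCert_setT. Qed.

Lemma card_mincert_le x : (#|mincert x| <= minCert S f x)%N.
Proof.
rewrite /mincert; case: arg_minnP => [|I _ I_min]; first exact: isCert_setT.
apply: (big_ind (fun v => #|I| <= v)%N) => [|a b Ia Ib|J /I_min //].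
- by rewrite -[X in (_ <= X)%N]card_ord max_card.
- by rewrite leq_min Ia Ib.
Qed.

(* An empty minimum certificate means f is constant on S; replacing it by [n]
   keeps the uniform distribution on it defined. *)
Definition cert x := if (0 < #|mincert x|)%N then mincert x else [set: 'I_n].

Lemma cert_isCert x : isCert S f x (cert x).
Proof. by rewrite /cert; case: ifP => _; [apply: mincert_isCert | apply: isCert_setT]. Qed.

Lemma card_cert_gt0 x : (0 < n)%N -> (0 < #|cert x|)%N.
Proof. by move=> n_gt0; rewrite /cert; case: ifP; rewrite ?cardsT ?card_ord. Qed.

Lemma card_cert_le {x y} : x \in S -> y \in S -> f y != f x ->
  (#|cert x| <= Cb S f (f x))%N.
Proof.
move=> xS yS fyx.
have [i + _] := isCert_diff (mincert_isCert x) yS fyx.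
rewrite /cert card_gt0; case: eqP => [->|_ _]; first by rewrite inE.
apply: leq_trans (card_mincert_le x) _.
by apply: (@leq_bigmax_cond _ _ _ x); rewrite xS eqxx.
Qed.

End Certificates.

Lemma maxPI_le_sqrt_C0C1 (R : realType) n (S : {set inp n}) (f : inp n -> bool) :
  (0 < n)%N -> S = [set: inp n] ->
  (maxPI R S f <= (Num.sqrt ((C0 S f)%:R * (C1 S f)%:R))%:E)%E.
Proof.
move=> n_gt0 S_full; rewrite -natrM.
apply: (maxPI_le_unif_on R S f (cert S f)) => [x _|x y xS yS fxy].
  exact: card_cert_gt0.
split; last exact: (isCert_meet S f S_full (cert_isCert S f x) (cert_isCert S f y) fxy).
have := card_cert_le S f xS yS; have := card_cert_le S f yS xS fxy.
rewrite /C0 /C1; case: (f x) (f y) fxy => [] [] //= _ y_le x_le.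
  by rewrite mulnC leq_mul ?x_le.
by rewrite leq_mul ?x_le.
Qed.

Lemma maxPI_le_sqrt_nCb (R : realType) n (S : {set inp n}) (f : inp n -> bool)
    (b : bool) :
  (0 < n)%N -> (maxPI R S f <= (Num.sqrt (n%:R * (Cb S f b)%:R))%:E)%E.
Proof.
move=> n_gt0; rewrite -natrM.
have other_b x y : f x != f y -> f x != b -> f y == b by case: (f x) (f y) b => [] [] [].
pose J x := if f x == b then cert S f x else [set: 'I_n].
apply: (maxPI_le_unif_on R S f J) => [x _|].
  by rewrite /J; case: ifP => _; rewrite ?card_cert_gt0 ?cardsT ?card_ord.
suff J_pair x y : x \in S -> y \in S -> f x != f y -> f x == b ->
    (#|J x| * #|J y| <= n * Cb S f b)%N /\
    exists i, [/\ i \in J x, i \in J y & x i != y i].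
  move=> x y xS yS fxy; have [fxb|fxb] := boolP (f x == b); first exact: J_pair.
  have fyx : f y != f x by rewrite eq_sym.
  have [card_le [i [iy ix yxi]]] := J_pair y x yS xS fyx (other_b x y fxy fxb).
  by split; [rewrite mulnC | exists i; rewrite eq_sym].
move=> xS yS fxy /eqP fxb.
have fyb : (f y == b) = false by rewrite -fxb eq_sym (negbTE fxy).
have fyx : f y != f x by rewrite eq_sym.
rewrite /J fxb eqxx fyb cardsT card_ord mulnC leq_mul2l -fxb.
split; first by rewrite (card_cert_le S f xS yS fyx) orbT.
by have [i iJ xyi] := isCert_diff S f (cert_isCert S f x) yS fyx; exists i; rewrite inE.
Qed.

Theorem mainTheorem12 (R : realType) (n : nat) (S : {set inp n})
    (f : inp n -> bool) :
  (0 < n)%N ->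
  (S = [set: inp n] ->
     (maxPI R S f <= (Num.sqrt ((C0 S f)%:R * (C1 S f)%:R))%:E)%E) /\
  (maxPI R S f <= (Num.min (Num.sqrt (n%:R * (C0 S f)%:R))
                           (Num.sqrt (n%:R * (C1 S f)%:R)))%:E)%E.
Proof.
move=> n_gt0; split; first exact: maxPI_le_sqrt_C0C1.
by rewrite EFin_min le_min !maxPI_le_sqrt_nCb.
Qed.
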